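(* Let $f:\mathbb{R}^2\to\mathbb{R}^2$ be a Topologically Anosov homeomorphism and let $x\in\mathbb{R}^2$ satisfy $\alpha(x)=\emptyset$. Then $\omega(x)\neq\emptyset$.
   Context: A homeomorphism $f:\mathbb{R}^2\to\mathbb{R}^2$ is Topologically Anosov (TA) if: (i) there is a continuous strictly positive $\epsilon:\mathbb{R}^2\to\mathbb{R}$ such that for all $x\neq y$ there is $k\in\mathbb{Z}$ with $\|f^k(x)-f^k(y)\|>\epsilon(f^k(x))$; and (ii) for every continuous strictly positive $\epsilon$ there is a continuous strictly positive $\delta$ such that every $\delta$-pseudo-orbit is $\epsilon$-shadowed by an orbit. A $\delta$-pseudo-orbit is a sequence $(x_n)_{n\in\mathbb{Z}}$ with $\|f(x_n)-x_{n+1}\|<\delta(f(x_n))$; it is $\epsilon$-shadowed by the orbit of $x$ if $\|x_n-f^n(x)\|<\epsilon(x_n)$ for all $n$. $\alpha(x),\omega(x)$ are the $\alpha$- and $\omega$-limit sets. *)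

From Stdlib Require Import Reals ZArith.
Open Scope R_scope.

Definition pt := (R * R)%type.

Definition dist2 (p q : pt) : R :=
  sqrt ((fst p - fst q) ^ 2 + (snd p - snd q) ^ 2).

Definition cont_pp (f : pt -> pt) : Prop :=
  forall x e, 0 < e -> exists d, 0 < d /\
    forall y, dist2 x y < d -> dist2 (f x) (f y) < e.

Definition cont_pr (h : pt -> R) : Prop :=
  forall x e, 0 < e -> exists d, 0 < d /\
    forall y, dist2 x y < d -> Rabs (h x - h y) < e.

Definition pos_cont (h : pt -> R) : Prop := cont_pr h /\ forall x, 0 < h x.

Definition homeo_pair (f g : pt -> pt) : Prop :=
  cont_pp f /\ cont_pp g /\ (forall x, g (f x) = x) /\ (forall x, f (g x) = x).

Definition iterZ (f g : pt -> pt) (k : Z) (x : pt) : pt :=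
  match k with
  | Z0 => x
  | Zpos p => Nat.iter (Pos.to_nat p) f x
  | Zneg p => Nat.iter (Pos.to_nat p) g x
  end.

Definition expansive (f g : pt -> pt) : Prop :=
  exists eps : pt -> R, pos_cont eps /\
    forall x y, x <> y -> exists k : Z,
      dist2 (iterZ f g k x) (iterZ f g k y) > eps (iterZ f g k x).

Definition pseudo_orbit (f : pt -> pt) (delta : pt -> R) (xs : Z -> pt) : Prop :=
  forall n : Z, dist2 (f (xs n)) (xs (n + 1)%Z) < delta (f (xs n)).

Definition shadowed (f g : pt -> pt) (eps : pt -> R) (xs : Z -> pt) (x : pt) : Prop :=
  forall n : Z, dist2 (xs n) (iterZ f g n x) < eps (xs n).

Definition shadowing (f g : pt -> pt) : Prop :=
  forall eps : pt -> R, pos_cont eps ->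
    exists delta : pt -> R, pos_cont delta /\
      forall xs : Z -> pt, pseudo_orbit f delta xs ->
        exists x, shadowed f g eps xs x.

Definition TA (f g : pt -> pt) : Prop :=
  homeo_pair f g /\ expansive f g /\ shadowing f g.

Definition omega_limit (f g : pt -> pt) (x : pt) (y : pt) : Prop :=
  forall e, 0 < e -> forall N : Z, exists n : Z,
    (N <= n)%Z /\ dist2 (iterZ f g n x) y < e.

Definition alpha_limit (f g : pt -> pt) (x : pt) (y : pt) : Prop :=
  forall e, 0 < e -> forall N : Z, exists n : Z,
    (n <= N)%Z /\ dist2 (iterZ f g n x) y < e.

(** By contradiction, suppose the orbit of [x] has neither an alpha- nor an
    omega-limit point, so both half-orbits leave every neighbourhood of every
    point.  Along such a sequence one can prescribe arbitrarily small positive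
    values of a continuous positive function (an infimum of [c j + d(p, s j)]).
    Choose points [x'_k != x] converging to [x], and a tolerance [eps] so small
    along the past of [x] and along the points [f^(k+1)(x'_k)] that an orbit
    [eps]-shadowing the past of [x] starts at [x] itself, while one shadowing
    the orbit of [x'_k] up to time [k+1] starts within [d(x, x'_k)/2] of [x'_k].
    For [k] large the pseudo-orbit following the past of [x] and then the
    future of [x'_k] is a [delta]-pseudo-orbit; its shadowing orbit would
    start at [x] and near [x'_k] simultaneously.  Only the shadowing
    property (ii) of the Topologically Anosov homeomorphism is used. *)

From Stdlib Require Import Reals ZArith.
From Stdlib Require Import Lra Lia Rgeom Classical ClassicalEpsilon.
Open Scope R_scope.

Lemma dist2_euc (p q : pt) : dist2 p q = dist_euc (fst p) (snd p) (fst q) (snd q).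
Proof. unfold dist2, dist_euc; rewrite !Rsqr_pow2; reflexivity. Qed.

Lemma dist2_ge0 (p q : pt) : 0 <= dist2 p q.
Proof. apply sqrt_pos. Qed.

Lemma dist2_sym (p q : pt) : dist2 p q = dist2 q p.
Proof. rewrite !dist2_euc; apply distance_symm. Qed.

Lemma dist2_refl (p : pt) : dist2 p p = 0.
Proof. rewrite dist2_euc; apply distance_refl. Qed.

Lemma dist2_triangle (p q r : pt) : dist2 p r <= dist2 p q + dist2 q r.
Proof. rewrite !dist2_euc; apply triangle. Qed.

Lemma dist2_eq0 (p q : pt) : dist2 p q = 0 -> p = q.
Proof.
  destruct p as [a b], q as [c d]; rewrite dist2_euc; unfold dist_euc; simpl; intro H.
  apply sqrt_eq_0 in H; [|apply Rplus_le_le_0_compat; apply Rle_0_sqr].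
  destruct (Rplus_sqr_eq_0 _ _ H) as [Hac Hbd].
  f_equal; lra.
Qed.

Lemma dist2_pos (p q : pt) : p <> q -> 0 < dist2 p q.
Proof.
  intro Hpq; destruct (Rle_lt_or_eq_dec _ _ (dist2_ge0 p q)) as [H | H]; [exact H |].
  exfalso; apply Hpq, dist2_eq0; symmetry; exact H.
Qed.

Lemma exists_other_point_within (p : pt) (rho : R) :
  0 < rho -> exists q, q <> p /\ dist2 p q < rho.
Proof.
  intro Hrho; exists (fst p + rho / 2, snd p); split.
  - intro E; apply (f_equal fst) in E; simpl in E; lra.
  - unfold dist2; cbn [fst snd].
    replace ((fst p - (fst p + rho / 2)) ^ 2 + (snd p - snd p) ^ 2) with ((rho / 2) ^ 2)
      by ring.
    rewrite sqrt_pow2; lra.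
Qed.

Definition tol (k : nat) : R := / INR (S k).

Lemma tol_pos (k : nat) : 0 < tol k.
Proof. apply Rinv_0_lt_compat, lt_0_INR; lia. Qed.

Lemma tol_eventually_lt (a : R) : 0 < a -> exists K, forall k, (K <= k)%nat -> tol k < a.
Proof.
  intro Ha; destruct (INR_archimed a 1 Ha) as [K HK]; exists K; intros k Hk.
  assert (HSk : 0 < INR (S k)) by (apply lt_0_INR; lia).
  apply le_INR in Hk; rewrite S_INR in HSk.
  unfold tol; rewrite S_INR.
  apply (Rmult_lt_reg_l (INR k + 1)); [lra |].
  rewrite Rinv_r by lra; nra.
Qed.

Lemma tol_vanishing_eq0 (d : R) : 0 <= d -> (forall k, d < tol k) -> d = 0.
Proof.
  intros Hd Htol; destruct (Rle_lt_or_eq_dec _ _ Hd) as [Hpos | E]; [| auto].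
  destruct (tol_eventually_lt d Hpos) as [K HK].
  specialize (HK K (le_n K)); specialize (Htol K); lra.
Qed.

Lemma pos_cont_min (e1 e2 : pt -> R) :
  pos_cont e1 -> pos_cont e2 -> pos_cont (fun p => Rmin (e1 p) (e2 p)).
Proof.
  intros [He1 Hpos1] [He2 Hpos2]; split; [| intro p; apply Rmin_pos; auto].
  intros p e He.
  destruct (He1 p e He) as [d1 [Hd1 H1]], (He2 p e He) as [d2 [Hd2 H2]].
  exists (Rmin d1 d2); split; [apply Rmin_pos; auto |]; intros q Hq.
  specialize (H1 q (Rlt_le_trans _ _ _ Hq (Rmin_l _ _))).
  specialize (H2 q (Rlt_le_trans _ _ _ Hq (Rmin_r _ _))).
  apply Rabs_def2 in H1, H2; apply Rabs_def1;
    unfold Rmin; repeat destruct Rle_dec; lra.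
Qed.

Lemma glb_le (u : nat -> R) (pr : has_lb u) (j : nat) : glb u pr <= u j.
Proof.
  unfold glb; destruct (lb_to_glb u pr) as [l [Hub _]].
  assert (Hj : EUn (opp_seq u) (- u j)) by (exists j; reflexivity).
  specialize (Hub _ Hj); lra.
Qed.

Lemma glb_ge (u : nat -> R) (pr : has_lb u) (L : R) :
  (forall j, L <= u j) -> L <= glb u pr.
Proof.
  intro HL; unfold glb; destruct (lb_to_glb u pr) as [l [_ Hleast]].
  enough (l <= - L) by lra.
  apply Hleast; intros v [j ->]; unfold opp_seq; specialize (HL j); lra.
Qed.

Lemma finite_min_pos (c : nat -> R) (J : nat) :
  (forall j, 0 < c j) -> exists L, 0 < L /\ forall j, (j < J)%nat -> L <= c j.
Proof.
  intro Hc; induction J as [| J [L [HL H]]].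
  - exists 1; split; [lra | intros j Hj; lia].
  - exists (Rmin L (c J)); split; [apply Rmin_pos; auto |].
    intros j Hj; destruct (Nat.eq_dec j J) as [-> | Hne]; [apply Rmin_r |].
    eapply Rle_trans; [apply Rmin_l | apply H; lia].
Qed.

Definition escaping (s : nat -> pt) : Prop :=
  forall p, exists e, 0 < e /\ exists J, forall j, (J <= j)%nat -> e <= dist2 p (s j).

Lemma escaping_perturbation (s s' : nat -> pt) :
  escaping s -> (forall j, dist2 (s j) (s' j) < tol j) -> escaping s'.
Proof.
  intros Hs Hs' p; destruct (Hs p) as [e [He [J HJ]]].
  destruct (tol_eventually_lt (e / 2)) as [K HK]; [lra |].
  exists (e / 2); split; [lra |]; exists (max J K); intros j Hj.
  specialize (HJ j ltac:(lia)); specialize (HK j ltac:(lia)); specialize (Hs' j).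
  pose proof (dist2_triangle p (s' j) (s j)); rewrite (dist2_sym (s' j)) in *; lra.
Qed.

Section WeightedDistance.

Variables (s : nat -> pt) (c : nat -> R).

Lemma weighted_dist_has_lb (p : pt) : has_lb (fun j => Rabs (c j) + dist2 p (s j)).
Proof.
  exists 0; intros v [j ->]; unfold opp_seq.
  pose proof (Rabs_pos (c j)); pose proof (dist2_ge0 p (s j)); lra.
Qed.

Definition weighted_dist (p : pt) : R := glb _ (weighted_dist_has_lb p).

Lemma weighted_dist_le (p : pt) (j : nat) : weighted_dist p <= Rabs (c j) + dist2 p (s j).
Proof. apply (glb_le (fun j => Rabs (c j) + dist2 p (s j))). Qed.

Lemma weighted_dist_lipschitz (p q : pt) : weighted_dist p <= weighted_dist q + dist2 p q.
Proof.
  enough (weighted_dist p - dist2 p q <= weighted_dist q) by lra.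
  apply glb_ge; intro j.
  pose proof (weighted_dist_le p j); pose proof (dist2_triangle p q (s j)); lra.
Qed.

Lemma weighted_dist_cont : cont_pr weighted_dist.
Proof.
  intros p e He; exists e; split; [exact He |]; intros q Hpq.
  pose proof (weighted_dist_lipschitz p q); pose proof (weighted_dist_lipschitz q p).
  rewrite (dist2_sym q p) in *; apply Rabs_def1; lra.
Qed.

Hypothesis c_pos : forall j, 0 < c j.

Lemma weighted_dist_pos : escaping s -> forall p, 0 < weighted_dist p.
Proof.
  intros Hs p; destruct (Hs p) as [e [He [J HJ]]].
  destruct (finite_min_pos c J c_pos) as [L [HL Hmin]].
  apply Rlt_le_trans with (Rmin e L); [apply Rmin_pos; auto |].
  apply glb_ge; intro j.
  pose proof (Rabs_pos (c j)); pose proof (dist2_ge0 p (s j)).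
  destruct (le_lt_dec J j) as [Hj | Hj].
  - specialize (HJ j Hj); pose proof (Rmin_l e L); lra.
  - specialize (Hmin j Hj); pose proof (Rmin_r e L).
    rewrite Rabs_right by (specialize (c_pos j); lra); lra.
Qed.

Lemma weighted_dist_at (j : nat) : weighted_dist (s j) <= c j.
Proof.
  pose proof (weighted_dist_le (s j) j); rewrite dist2_refl, Rabs_right in *;
    [lra | specialize (c_pos j); lra].
Qed.

End WeightedDistance.

Lemma escaping_tolerance (s : nat -> pt) (c : nat -> R) :
  escaping s -> (forall j, 0 < c j) ->
  exists eps, pos_cont eps /\ forall j, eps (s j) <= c j.
Proof.
  intros Hs Hc; exists (weighted_dist s c); split.
  - split; [apply weighted_dist_cont | apply weighted_dist_pos; auto].
  - apply weighted_dist_at; exact Hc.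
Qed.

Lemma cont_pp_iter (f : pt -> pt) (n : nat) : cont_pp f -> cont_pp (Nat.iter n f).
Proof.
  intro Hf; induction n as [| n IH]; simpl.
  - intros p e He; exists e; split; [exact He | intros q Hq; exact Hq].
  - intros p e He; destruct (Hf (Nat.iter n f p) e He) as [d1 [Hd1 H1]].
    destruct (IH p d1 Hd1) as [d2 [Hd2 H2]].
    exists d2; split; [exact Hd2 | intros q Hq; apply H1, H2, Hq].
Qed.

Lemma iter_cancel (f g : pt -> pt) (n : nat) (p : pt) :
  (forall z, f (g z) = z) -> Nat.iter n f (Nat.iter n g p) = p.
Proof.
  intro Hfg; revert p; induction n as [| n IH]; intro p; [reflexivity |].
  change (Nat.iter (S n) g p) with (g (Nat.iter n g p)).
  rewrite Nat.iter_succ_r, Hfg; apply IH.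
Qed.

Lemma cont_pp_iter_cancel (f g : pt -> pt) (n : nat) (p : pt) (e : R) :
  cont_pp f -> (forall z, f (g z) = z) -> 0 < e ->
  exists d, 0 < d /\ forall z, dist2 (Nat.iter n g p) z < d -> dist2 p (Nat.iter n f z) < e.
Proof.
  intros Hf Hfg He.
  destruct (cont_pp_iter f n Hf (Nat.iter n g p) e He) as [d [Hd H]].
  exists d; split; [exact Hd |]; intros z Hz.
  rewrite <- (iter_cancel f g n p Hfg) at 1; auto.
Qed.

Lemma iterZ_of_nat (f g : pt -> pt) (n : nat) (p : pt) :
  iterZ f g (Z.of_nat n) p = Nat.iter n f p.
Proof. destruct n; simpl; [reflexivity | now rewrite SuccNat2Pos.id_succ]. Qed.

Lemma iterZ_opp_of_nat (f g : pt -> pt) (n : nat) (p : pt) :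
  iterZ f g (- Z.of_nat n) p = Nat.iter n g p.
Proof. destruct n; simpl; [reflexivity | now rewrite SuccNat2Pos.id_succ]. Qed.

Lemma iterZ_succ (f g : pt -> pt) (n : Z) (p : pt) :
  (forall z, f (g z) = z) -> f (iterZ f g n p) = iterZ f g (n + 1) p.
Proof.
  intro Hfg; destruct (Z_lt_le_dec n 0) as [Hn | Hn].
  - replace n with (- Z.of_nat (S (Z.to_nat (- n - 1))))%Z by lia.
    replace (- Z.of_nat (S (Z.to_nat (- n - 1))) + 1)%Z
      with (- Z.of_nat (Z.to_nat (- n - 1)))%Z by lia.
    rewrite !iterZ_opp_of_nat; apply Hfg.
  - replace n with (Z.of_nat (Z.to_nat n)) by lia.
    replace (Z.of_nat (Z.to_nat n) + 1)%Z with (Z.of_nat (S (Z.to_nat n))) by lia.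
    rewrite !iterZ_of_nat; reflexivity.
Qed.

Definition splice_orbits (f g : pt -> pt) (x x' : pt) (n : Z) : pt :=
  if (n <=? 0)%Z then iterZ f g n x else iterZ f g n x'.

Lemma splice_orbits_past (f g : pt -> pt) (x x' : pt) (n : nat) :
  splice_orbits f g x x' (- Z.of_nat n) = Nat.iter n g x.
Proof.
  unfold splice_orbits; rewrite (proj2 (Z.leb_le _ 0)) by lia; apply iterZ_opp_of_nat.
Qed.

Lemma splice_orbits_future (f g : pt -> pt) (x x' : pt) (n : nat) :
  splice_orbits f g x x' (Z.of_nat (S n)) = Nat.iter (S n) f x'.
Proof.
  unfold splice_orbits; rewrite (proj2 (Z.leb_gt _ 0)) by lia; apply iterZ_of_nat.
Qed.

Lemma splice_orbits_pseudo_orbit (f g : pt -> pt) (delta : pt -> R) (x x' : pt) :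
  (forall z, f (g z) = z) -> (forall p, 0 < delta p) ->
  dist2 (f x) (f x') < delta (f x) -> pseudo_orbit f delta (splice_orbits f g x x').
Proof.
  intros Hfg Hdelta Hjump n; unfold splice_orbits.
  destruct (Z.eq_dec n 0) as [-> | Hn0]; [exact Hjump |].
  destruct (Z.leb_spec n 0); destruct (Z.leb_spec (n + 1) 0); try lia;
    rewrite iterZ_succ, dist2_refl by exact Hfg; apply Hdelta.
Qed.

Section EscapingOrbit.

Variables (f g : pt -> pt) (x : pt).
Hypotheses (f_cont : cont_pp f) (g_cont : cont_pp g)
  (gK : forall z, g (f z) = z) (fK : forall z, f (g z) = z).

Lemma past_escaping :
  (forall y, ~ alpha_limit f g x y) -> escaping (fun j => Nat.iter (S j) g x).
Proof.
  intros Hna p; apply NNPP; intro Hnot; apply (Hna p); intros e He N.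
  apply NNPP; intro Hfar; apply Hnot; exists e; split; [exact He |].
  exists (Z.to_nat (- N)); intros j Hj; apply Rnot_lt_le; intro Hclose; apply Hfar.
  exists (- Z.of_nat (S j))%Z; split; [lia |].
  rewrite iterZ_opp_of_nat, dist2_sym; exact Hclose.
Qed.

Lemma future_escaping :
  (forall y, ~ omega_limit f g x y) -> escaping (fun j => Nat.iter (S j) f x).
Proof.
  intros Hnw p; apply NNPP; intro Hnot; apply (Hnw p); intros e He N.
  apply NNPP; intro Hfar; apply Hnot; exists e; split; [exact He |].
  exists (Z.to_nat N); intros j Hj; apply Rnot_lt_le; intro Hclose; apply Hfar.
  exists (Z.of_nat (S j)); split; [lia |].
  rewrite iterZ_of_nat, dist2_sym; exact Hclose.
Qed.

Lemma past_tolerance :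
  (forall y, ~ alpha_limit f g x y) ->
  exists eps, pos_cont eps /\ forall m z,
    dist2 (Nat.iter (S m) g x) z < eps (Nat.iter (S m) g x) ->
    dist2 x (Nat.iter (S m) f z) < tol m.
Proof.
  intro Hna.
  destruct (choice (fun m d => 0 < d /\ forall z, dist2 (Nat.iter (S m) g x) z < d ->
                      dist2 x (Nat.iter (S m) f z) < tol m)) as [c Hc].
  { intro m; apply cont_pp_iter_cancel; auto using tol_pos. }
  destruct (escaping_tolerance _ c (past_escaping Hna)) as [eps [Heps Hle]];
    [intro m; apply Hc |].
  exists eps; split; [exact Heps |]; intros m z Hz.
  apply Hc; eapply Rlt_le_trans; [exact Hz | apply Hle].
Qed.

Lemma perturbed_future_tolerance :
  (forall y, ~ omega_limit f g x y) ->
  exists x' : nat -> pt, (forall k, x' k <> x /\ dist2 x (x' k) < tol k) /\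
  exists eps, pos_cont eps /\ forall k z,
    dist2 (Nat.iter (S k) f (x' k)) z < eps (Nat.iter (S k) f (x' k)) ->
    dist2 (x' k) (Nat.iter (S k) g z) < dist2 x (x' k) / 2.
Proof.
  intro Hnw.
  destruct (choice (fun k d => 0 < d /\ forall z, dist2 (Nat.iter (S k) f x) z < d ->
                      dist2 x (Nat.iter (S k) g z) < tol k)) as [d Hd].
  { intro k; apply cont_pp_iter_cancel; auto using tol_pos. }
  destruct (choice (fun k q => q <> Nat.iter (S k) f x /\
                      dist2 (Nat.iter (S k) f x) q < Rmin (d k) (tol k))) as [q Hq].
  { intro k; apply exists_other_point_within, Rmin_pos; [apply Hd | apply tol_pos]. }
  set (x' k := Nat.iter (S k) g (q k)).
  assert (Hq_orbit : forall k, Nat.iter (S k) f (x' k) = q k) by (intro k; apply iter_cancel, fK).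
  assert (Hx' : forall k, x' k <> x /\ dist2 x (x' k) < tol k).
  { intro k; destruct (Hq k) as [Hne Hclose]; split.
    - intro E; apply Hne; rewrite <- E; symmetry; apply Hq_orbit.
    - apply Hd; eapply Rlt_le_trans; [exact Hclose | apply Rmin_l]. }
  exists x'; split; [exact Hx' |].
  destruct (choice (fun k t => 0 < t /\ forall z, dist2 (q k) z < t ->
                      dist2 (x' k) (Nat.iter (S k) g z) < dist2 x (x' k) / 2)) as [t Ht].
  { intro k; apply (cont_pp_iter g (S k) g_cont).
    pose proof (dist2_pos x (x' k) (not_eq_sym (proj1 (Hx' k)))); lra. }
  assert (Hq_escaping : escaping q).
  { apply (escaping_perturbation _ q (future_escaping Hnw)); intro k.
    eapply Rlt_le_trans; [apply Hq | apply Rmin_r]. }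
  destruct (escaping_tolerance q t Hq_escaping) as [eps [Heps Hle]]; [intro k; apply Ht |].
  exists eps; split; [exact Heps |]; intros k z; rewrite Hq_orbit; intro Hz.
  apply Ht; eapply Rlt_le_trans; [exact Hz | apply Hle].
Qed.

Lemma escaping_orbit_not_shadowed :
  (forall y, ~ alpha_limit f g x y) -> (forall y, ~ omega_limit f g x y) ->
  ~ shadowing f g.
Proof.
  intros Hna Hnw Hsh.
  destruct (past_tolerance Hna) as [eps1 [Heps1 Hpast]].
  destruct (perturbed_future_tolerance Hnw) as [x' [Hx' [eps2 [Heps2 Hfuture]]]].
  destruct (Hsh _ (pos_cont_min _ _ Heps1 Heps2)) as [delta [[_ Hdelta] Hshadow]].
  destruct (f_cont x (delta (f x)) (Hdelta (f x))) as [eta [Heta Hjump]].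
  destruct (tol_eventually_lt eta Heta) as [k Hk]; specialize (Hk k (le_n k)).
  destruct (Hx' k) as [Hne Hnear].
  destruct (Hshadow (splice_orbits f g x (x' k))) as [y Hy].
  { apply splice_orbits_pseudo_orbit; auto; apply Hjump; lra. }
  assert (Hyx : y = x).
  { symmetry; apply dist2_eq0, tol_vanishing_eq0; [apply dist2_ge0 | intro m].
    rewrite <- (iter_cancel f g (S m) y fK); apply Hpast.
    specialize (Hy (- Z.of_nat (S m))%Z).
    rewrite splice_orbits_past, iterZ_opp_of_nat in Hy.
    eapply Rlt_le_trans; [exact Hy | apply Rmin_l]. }
  assert (Hyx' : dist2 (x' k) y < dist2 x (x' k) / 2).
  { rewrite <- (iter_cancel g f (S k) y gK); apply Hfuture.
    specialize (Hy (Z.of_nat (S k))).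
    rewrite splice_orbits_future, iterZ_of_nat in Hy.
    eapply Rlt_le_trans; [exact Hy | apply Rmin_r]. }
  subst y; rewrite dist2_sym in Hyx'.
  pose proof (dist2_pos x (x' k) (not_eq_sym Hne)); lra.
Qed.

End EscapingOrbit.

Theorem mainTheorem10 (f g : pt -> pt) (x : pt) :
  TA f g ->
  (forall y, ~ alpha_limit f g x y) ->
  exists y, omega_limit f g x y.
Proof.
  intros [[Hf [Hg [Hgf Hfg]]] [_ Hsh]] Hna.
  apply NNPP; intro Hno.
  apply (escaping_orbit_not_shadowed f g x Hf Hg Hgf Hfg Hna); [| exact Hsh].
  intros y Hy; apply Hno; exists y; exact Hy.
Qed.
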